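(* Let $G$ be a graph with no isolated vertex and let $H$ be a nontrivial graph (i.e., of order at least two) such that $\gamma_I(H)\ne 3$ or $\gamma(H)\ne 3$. Then: (i) if $\gamma(H)=1$, then $\gamma_I(G\circ H)=\gamma_{(2,1,0)}(G)$; (ii) if $\gamma_2(H)=\gamma(H)=2$, then $\gamma_I(G\circ H)=\gamma_{(2,2,0)}(G)$; (iii) if $\gamma_2(H)>\gamma(H)=2$, then $\gamma_I(G\circ H)=\gamma_{(2,2,1)}(G)$; (iv) if $\gamma(H)\ge 3$, then $\gamma_I(G\circ H)=\gamma_{(2,2,2)}(G)$.
   Context: All graphs are finite and simple; $N(v)$ denotes the open neighbourhood of a vertex $v$. For an integer $l\ge1$ and a vector $w=(w_0,\dots,w_l)$ of nonnegative integers with $w_0\ge 1$, a function $f:V(G)\to\{0,1,\dots,l\}$ is a $w$-dominating function on $G$ if $\sum_{u\in N(v)}f(u)\ge w_i$ for every vertex $v$ with $f(v)=i$ ($i=0,\dots,l$). The weight of $f$ is $\omega(f)=\sum_{v\in V(G)}f(v)$, and the $w$-domination number $\gamma_w(G)=\gamma_{(w_0,\dots,w_l)}(G)$ is the minimum weight of a $w$-dominating function on $G$. The Italian domination number is $\gamma_I(G)=\gamma_{(2,0,0)}(G)$, i.e., the minimum weight of $f:V(G)\to\{0,1,2\}$ with $\sum_{u\in N(v)}f(u)\ge 2$ for every $v$ with $f(v)=0$. $\gamma(H)$ is the domination number of $H$, and $\gamma_2(H)$ is the $2$-domination number: the minimum cardinality of a set $S\subseteq V(H)$ such that every vertex not in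 $S$ has at least two neighbours in $S$. The lexicographic product $G\circ H$ has vertex set $V(G)\times V(H)$, with $(u,v)(x,y)$ an edge iff $ux\in E(G)$, or $u=x$ and $vy\in E(H)$. *)

From mathcomp Require Import all_boot.
Set Implicit Arguments. Unset Strict Implicit. Unset Printing Implicit Defensive.

Definition simple_graph (T : finType) (e : rel T) : Prop :=
  symmetric e /\ irreflexive e.

Definition no_isolated (T : finType) (e : rel T) : Prop :=
  forall v : T, exists u : T, e v u.

(* w = (w_0, ..., w_l) is represented by the list w with size w = l + 1;
   a function f : V -> {0,...,l} is an ffun into 'I_(size w). *)
Definition nbsum (T : finType) (e : rel T) (n : nat) (f : {ffun T -> 'I_n}) (v : T) : nat :=
  \sum_(u | e v u) (f u : nat).

Definition is_wdom (T : finType) (e : rel T) (w : seq nat)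
    (f : {ffun T -> 'I_(size w)}) : bool :=
  [forall v, nth 0 w (f v) <= nbsum e f v].

Definition weight (T : finType) (n : nat) (f : {ffun T -> 'I_n}) : nat :=
  \sum_v (f v : nat).

(* Minimum weight of a w-dominating function (0 if none exists; every
   weight is at most (size w).-1 * #|T|, so that bound is a neutral start). *)
Definition gamma_w (T : finType) (e : rel T) (w : seq nat) : nat :=
  \big[minn/((size w).-1 * #|T|)]_(f : {ffun T -> 'I_(size w)} | is_wdom e f) weight f.

Definition gamma_I (T : finType) (e : rel T) : nat := gamma_w e [:: 2; 0; 0].

Definition is_kdom (T : finType) (e : rel T) (k : nat) (S : {set T}) : bool :=
  [forall v, (v \notin S) ==> (k <= #|[set u in S | e v u]|)].

Definition gamma_k (T : finType) (e : rel T) (k : nat) : nat :=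
  \big[minn/#|T|]_(S : {set T} | is_kdom e k S) #|S|.

Definition gamma (T : finType) (e : rel T) : nat := gamma_k e 1.
Definition gamma_2 (T : finType) (e : rel T) : nat := gamma_k e 2.

Definition lexprod (T1 T2 : finType) (e1 : rel T1) (e2 : rel T2) : rel (T1 * T2) :=
  fun p q => e1 p.1 q.1 || ((p.1 == q.1) && e2 p.2 q.2).

From mathcomp Require Import all_boot zify.
Set Implicit Arguments. Unset Strict Implicit. Unset Printing Implicit Defensive.

(* Let f be an Italian dominating function of G o H and F x the weight that f
   puts on the copy of H at x.  A zero of f on that copy is dominated by the
   weight of the neighbouring copies plus that of f inside the copy; as the
   hypotheses on gamma(H), gamma_2(H) and gamma_I(H) bound from below the weight
   of a function on H dominating in the corresponding sense, the column sums F
   satisfy the (2, w1, w2)-domination conditions, except that F may exceed 2,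
   the surplus then acting as neighbourhood weight.  Such relaxed functions are
   trimmed to values in {0, 1, 2} without increasing the weight, moving weight
   onto one neighbour when the neighbourhood is too light, so
   gamma_w(G) <= gamma_I(G o H).  Conversely, a minimum w-dominating function g
   of G is spread over each copy of H as a point mass, or over a 2-element
   (1- or 2-)dominating set of H when g x = 2, which yields an Italian
   dominating function of G o H of the same weight. *)

Section NatBigops.
Variable I : finType.
Implicit Types (P Q : pred I) (F : I -> nat).

Lemma leq_sum_subpred P Q F :
  subpred P Q -> \sum_(i | P i) F i <= \sum_(i | Q i) F i.
Proof. exact: (sub_le_big leqnn (fun m n => leq_addr n m)). Qed.

Lemma leq_term_sum P F i : P i -> F i <= \sum_(j | P j) F j.
Proof. by move=> Pi; rewrite (bigD1 i Pi) leq_addr. Qed.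

Lemma leq_term_sumT F i : F i <= \sum_j F j.
Proof. exact: leq_term_sum. Qed.

Lemma sum_pointmass (a : I) n : \sum_i (if i == a then n else 0) = n.
Proof. by rewrite (bigD1 a) //= eqxx big1 ?addn0 // => i /negbTE ->. Qed.

Lemma sum_indicator (S : {set I}) : \sum_i (i \in S : nat) = #|S|.
Proof. by rewrite -sum1_card [RHS]big_mkcond; apply: eq_bigr => i _; case: (i \in S). Qed.

Lemma bigmin_le P F s i : P i -> \big[minn/s]_(j | P j) F j <= F i.
Proof.
move=> Pi; rewrite unlock; elim: (index_enum I) (mem_index_enum i) => //= j r IHr.
rewrite inE => /predU1P[<-|ir]; first by rewrite Pi /= geq_minl.
by case: (P j); rewrite /= ?geq_min IHr ?orbT.
Qed.

Lemma leq_bigmin P F s n :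
  n <= s -> (forall i, P i -> n <= F i) -> n <= \big[minn/s]_(j | P j) F j.
Proof. by move=> ns nF; elim/big_ind: _ => // x y; rewrite leq_min => -> ->. Qed.

Lemma bigmin_attained P F s i0 :
  P i0 -> F i0 <= s -> exists2 i, P i & \big[minn/s]_(j | P j) F j = F i.
Proof.
move=> Pi0 Fi0s.
pose K m := m = s \/ exists2 i, P i & m = F i.
have : K (\big[minn/s]_(j | P j) F j).
  apply: big_ind => [|x y Kx Ky|i Pi]; [by left | | by right; exists i].
  by rewrite /minn; case: ltnP.
case=> [min_s|[i Pi ->]]; last by exists i.
by exists i0 => //; apply/eqP; rewrite eqn_leq bigmin_le // min_s Fi0s.
Qed.

Lemma sum_split2 F x y : y != x ->
  \sum_i F i = F x + F y + \sum_(i | (i != x) && (i != y)) F i.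
Proof. by move=> yx; rewrite (bigD1 x) // (bigD1 y) //= addnA. Qed.

Lemma card_support_le_sum F : #|[set i | 0 < F i]| <= \sum_i F i.
Proof.
rewrite -sum1_card (@leq_trans (\sum_(i in [set i | 0 < F i]) F i)) //.
  by apply: leq_sum => i; rewrite inE.
exact: leq_sum_subpred.
Qed.

End NatBigops.

Lemma pair_sum (I J : finType) (h : I * J -> nat) :
  \sum_p h p = \sum_i \sum_j h (i, j).
Proof. by rewrite pair_bigA; apply: eq_bigr => -[]. Qed.

Definition nsum (T : finType) (e : rel T) (h : T -> nat) (v : T) : nat :=
  \sum_(u | e v u) h u.

Definition ffun3 (T : finType) (h : T -> nat) : {ffun T -> 'I_3} :=
  [ffun v => inord (h v)].

(* For values in {0, 1, 2} this is exactly the (2, w1, w2)-domination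
   condition at a vertex of weight a and neighbourhood weight n; a weight
   a > 2 is allowed, its surplus a - 2 counting like neighbourhood weight. *)
Definition wcond (w1 w2 a n : nat) : Prop :=
  [/\ a = 0 -> 2 <= n, a = 1 -> w1 <= n & 2 <= a -> 2 + w2 <= a + n].

Definition relaxed_wdom (T : finType) (e : rel T) (w1 w2 : nat) (h : T -> nat) :=
  forall v, wcond w1 w2 (h v) (nsum e h v).

Lemma wcond_mono w1 w2 a n n' : wcond w1 w2 a n -> n <= n' -> wcond w1 w2 a n'.
Proof. by move=> [h0 h1 h2] le_nn'; split=> [/h0|/h1|/h2]; lia. Qed.

Lemma wcond_ge2 w1 w2 a n : w1 <= 2 -> w2 <= 2 -> 2 <= n -> wcond w1 w2 a n.
Proof. by move=> *; split=> *; lia. Qed.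

Section DominationNumbers.
Variables (T : finType) (e : rel T).
Implicit Type h : T -> nat.

Lemma nsum_ge_nbr h v u : e v u -> h u <= nsum e h v.
Proof. exact: leq_term_sum. Qed.

Lemma nsum_indicator (S : {set T}) v :
  nsum e (fun u => (u \in S : nat)) v = #|[set u in S | e v u]|.
Proof.
rewrite /nsum -sum1_card big_mkcond [RHS]big_mkcond /=.
by apply: eq_bigr => u _; rewrite inE andbC; case: (e v u); case: (u \in S).
Qed.

Lemma ffun3E h v : h v <= 2 -> (ffun3 h v : nat) = h v.
Proof. by move=> hv; rewrite ffunE inordK. Qed.

Lemma weight_ffun3 h : (forall v, h v <= 2) -> weight (ffun3 h) = \sum_v h v.
Proof. by move=> h_le2; apply: eq_bigr => v _; rewrite ffun3E. Qed.

Lemma relaxed_wdom_ffun3 w1 w2 h : (forall v, h v <= 2) ->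
  relaxed_wdom e w1 w2 h -> @is_wdom _ e [:: 2; w1; w2] (ffun3 h).
Proof.
move=> h_le2 h_rel; apply/forallP => v.
have -> : nbsum e (ffun3 h) v = nsum e h v by apply: eq_bigr => u _; rewrite ffun3E.
rewrite ffun3E //; case: (h_rel v); move: (h_le2 v).
by case: (h v) => [|[|[|//]]] /= _ h0 h1 h2; [exact: h0 | exact: h1 | lia].
Qed.

Lemma gamma_w_le_weight w (f : {ffun T -> 'I_(size w)}) :
  is_wdom e f -> gamma_w e w <= weight f.
Proof. exact: bigmin_le. Qed.

Lemma gamma_w_le_sum w1 w2 h : (forall v, h v <= 2) ->
  relaxed_wdom e w1 w2 h -> gamma_w e [:: 2; w1; w2] <= \sum_v h v.
Proof.
by move=> h_le2 /(relaxed_wdom_ffun3 h_le2)/gamma_w_le_weight; rewrite weight_ffun3.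
Qed.

Lemma gamma_I_le_sum h : (forall v, h v <= 2) ->
  (forall v, h v = 0 -> 2 <= nsum e h v) -> gamma_I e <= \sum_v h v.
Proof.
move=> h_le2 h_dom; apply: gamma_w_le_sum => // v.
by split=> [/h_dom //|//|]; lia.
Qed.

Lemma gamma_w_attained w1 w2 : (forall v, w2 <= nsum e (fun=> 2) v) ->
  exists2 g, @is_wdom _ e [:: 2; w1; w2] g & weight g = gamma_w e [:: 2; w1; w2].
Proof.
move=> w2_le.
have const2_wdom : @is_wdom _ e [:: 2; w1; w2] (ffun3 (fun=> 2)).
  by apply: relaxed_wdom_ffun3 => // v; split=> // _; have := w2_le v; lia.
have weight_const2 : weight (ffun3 (fun _ : T => 2)) <= 2 * #|T|.
  by rewrite weight_ffun3 // sum_nat_const mulnC.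
have [g g_wdom min_g] := bigmin_attained const2_wdom weight_const2.
by exists g; last exact: esym min_g.
Qed.

Lemma gamma_k_le_card k (S : {set T}) : is_kdom e k S -> gamma_k e k <= #|S|.
Proof. exact: bigmin_le. Qed.

Lemma kdom_setT k : is_kdom e k setT.
Proof. by apply/forallP => v; rewrite inE. Qed.

Lemma gamma_k_attained k : exists2 S : {set T}, is_kdom e k S & #|S| = gamma_k e k.
Proof.
have [S S_kdom min_S] :=
  @bigmin_attained _ _ (fun S : {set T} => #|S|) _ _ (kdom_setT k) (eq_leq (cardsT T)).
by exists S; last exact: esym min_S.
Qed.

End DominationNumbers.

Section Reduction.
Variables (T : finType) (e : rel T) (w1 w2 : nat).
Hypotheses (e_sym : symmetric e) (e_irr : irreflexive e) (e_ni : no_isolated e)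
  (w1_le2 : w1 <= 2) (w2_le2 : w2 <= 2).
Implicit Types F : T -> nat.

Lemma relaxed_wdom_update F F' x :
  relaxed_wdom e w1 w2 F -> F' x = 2 -> w2 <= nsum e F' x ->
  (forall u, u != x -> F u <= F' u) ->
  (forall u, u != x -> F u = F' u \/ 2 <= nsum e F' u) ->
  relaxed_wdom e w1 w2 F'.
Proof.
move=> F_rel F'x F'x_dom le_FF' F'_eq v.
have [->|vx] := eqVneq v x; first by rewrite F'x; split=> //; lia.
have [evx|nevx] := boolP (e v x).
  by apply: wcond_ge2 => //; rewrite -F'x; exact: nsum_ge_nbr.
have [<-|] := F'_eq v vx; last exact: wcond_ge2.
apply: (wcond_mono (F_rel v)); apply: leq_sum => u evu; apply: le_FF'.
by apply: contraNneq nevx => <-.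
Qed.

Lemma nsum_le1_heavy_nbr F x :
  nsum e F x <= 1 -> exists2 y, e x y & nsum e F x <= F y.
Proof.
move=> nsum_le1.
have [->|nsum_pos] := posnP (nsum e F x); first by have [y] := e_ni x; exists y.
have [y /andP[exy Fy_pos]] : exists y, e x y && (0 < F y).
  apply/existsP; apply: contraTT nsum_pos; rewrite negb_exists => /forallP F0.
  rewrite -leqNgt leqn0 sum_nat_eq0; apply/forall_inP => y exy.
  by have := F0 y; rewrite exy -eqn0Ngt.
by exists y => //; apply: leq_trans nsum_le1 Fy_pos.
Qed.

Lemma excess_proper F F' x : 2 < F x -> F' x <= 2 ->
  (forall v, 2 < F' v -> 2 < F v) -> [set v | 2 < F' v] \proper [set v | 2 < F v].
Proof.
move=> Fx F'x F'_F; apply/properP; split; last by exists x; rewrite !inE // -leqNgt.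
by apply/subsetP => v; rewrite !inE; exact: F'_F.
Qed.

Definition trim_step F F' :=
  [/\ relaxed_wdom e w1 w2 F', \sum_v F' v <= \sum_v F v
    & [set v | 2 < F' v] \proper [set v | 2 < F v]].

Lemma trim_step_local F x :
  relaxed_wdom e w1 w2 F -> 2 < F x -> w2 <= nsum e F x -> exists F', trim_step F F'.
Proof.
move=> F_rel Fx Fx_dom; pose F' v := if v == x then 2 else F v.
have F'_out u : u != x -> F' u = F u by rewrite /F' => /negbTE ->.
have F'x : F' x = 2 by rewrite /F' eqxx.
exists F'; split.
- apply: (relaxed_wdom_update F_rel F'x) => [|u /F'_out ->|u /F'_out ->] //; last by left.
  rewrite (_ : nsum e F' x = nsum e F x) //; apply: eq_bigr => u exu.
  by apply: F'_out; apply: contraTneq exu => ->; rewrite e_irr.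
- apply: leq_sum => v _; rewrite /F'; case: eqP => [->|//]; exact: ltnW.
- by apply: (excess_proper (x := x)); rewrite ?F'x // => v; rewrite /F'; case: eqP.
Qed.

(* As nsum e F x <= 1, a single neighbour y carries that weight; lowering x to 2
   and raising y to w2 costs nothing, since 2 + w2 <= F x + nsum e F x <= F x + F y. *)
Lemma trim_step_shift F x : relaxed_wdom e w1 w2 F -> 2 < F x -> nsum e F x < w2 ->
  exists F', trim_step F F'.
Proof.
move=> F_rel Fx Fx_dom; have [_ _ /(_ (ltnW Fx)) Fx_wcond] := F_rel x.
have [y exy nsum_le_Fy] : exists2 y, e x y & nsum e F x <= F y.
  by apply: nsum_le1_heavy_nbr; rewrite -ltnS (leq_trans Fx_dom).
have yx : y != x by apply: contraTneq exy => ->; rewrite e_irr.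
have Fy_lt : F y < w2 := leq_ltn_trans (nsum_ge_nbr F exy) Fx_dom.
pose F' v := if v == x then 2 else if v == y then w2 else F v.
have F'x : F' x = 2 by rewrite /F' eqxx.
have F'y : F' y = w2 by rewrite /F' (negbTE yx) eqxx.
have F'_out u : u != x -> u != y -> F' u = F u by rewrite /F' => /negbTE -> /negbTE ->.
exists F'; split.
- apply: (relaxed_wdom_update F_rel F'x).
  + by rewrite -F'y; exact: nsum_ge_nbr.
  + move=> u ux; have [->|uy] := eqVneq u y; first by rewrite F'y ltnW.
    by rewrite F'_out.
  + move=> u ux; have [->|uy] := eqVneq u y; last by left; rewrite F'_out.
    by right; rewrite -F'x; apply: nsum_ge_nbr; rewrite e_sym.
- rewrite !(sum_split2 _ yx) F'x F'y leq_add //; first lia.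
  by apply: eq_leq; apply: eq_bigr => v /andP[vx vy]; rewrite F'_out.
- apply: (excess_proper (x := x)); rewrite ?F'x // => v; rewrite /F'.
  by case: eqP => // _; case: eqP => // _; lia.
Qed.

Lemma gamma_w_le_relaxed F :
  relaxed_wdom e w1 w2 F -> gamma_w e [:: 2; w1; w2] <= \sum_v F v.
Proof.
have [n] := ubnP #|[set v | 2 < F v]|; elim: n F => // n IHn F excess_lt F_rel.
have [/forallP F_le2|] := boolP [forall v, F v <= 2]; first exact: gamma_w_le_sum.
rewrite negb_forall => /existsP[x]; rewrite -ltnNge => Fx.
have [F' [F'_rel sum_le excess_F']] : exists F', trim_step F F'.
  by case: (leqP w2 (nsum e F x)); [exact: trim_step_local | exact: trim_step_shift].
apply: leq_trans (IHn F' _ F'_rel) sum_le.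
exact: leq_trans (proper_card excess_F') _.
Qed.

End Reduction.

Section DominationByFunctions.
Variables (T : finType) (e : rel T).
Implicit Type g : T -> nat.

Lemma gamma_le_sum g : (forall y, g y = 0 -> 0 < nsum e g y) -> gamma e <= \sum_y g y.
Proof.
move=> g_dom; apply: leq_trans (card_support_le_sum g); apply: gamma_k_le_card.
apply/forallP => v; apply/implyP; rewrite inE -eqn0Ngt => /eqP/g_dom.
rewrite lt0n sum_nat_eq0 negb_forall => /existsP[u]; rewrite negb_imply => /andP[evu gu].
by apply/card_gt0P; exists u; rewrite !inE evu andbT lt0n.
Qed.

Lemma gamma_2_le_sum g : (forall y, g y <= 1) ->
  (forall y, g y = 0 -> 2 <= nsum e g y) -> gamma_2 e <= \sum_y g y.
Proof.
move=> g_le1 g_dom; apply: leq_trans (card_support_le_sum g); apply: gamma_k_le_card.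
apply/forallP => v; apply/implyP; rewrite inE -eqn0Ngt => /eqP/g_dom/leq_trans; apply.
rewrite -nsum_indicator; apply: leq_sum => u _; rewrite inE.
by have := g_le1 u; case: (g u) => [|[]].
Qed.

Lemma gamma_le1_or_gamma_2_le2 g : (forall y, g y <= 2) ->
  (forall y, g y = 0 -> 2 <= nsum e g y) -> \sum_y g y <= 2 ->
  gamma e <= 1 \/ gamma_2 e <= 2.
Proof.
move=> g_le2 g_dom g_sum.
have [/existsP[y0 /eqP gy0]|/existsPn no2] := boolP [exists y, g y == 2]; [left | right].
  have g0 v : v != y0 -> g v = 0.
    by move=> vy0; move: g_sum; rewrite (sum_split2 _ vy0) gy0; lia.
  rewrite -(cards1 y0); apply: gamma_k_le_card; apply/forallP => v; apply/implyP.
  rewrite inE => vy0; apply/card_gt0P; exists y0; rewrite !inE eqxx /=.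
  apply: contraTT (g_dom v (g0 v vy0)) => nevy0; rewrite -ltnNge ltnS leqW // leqn0.
  rewrite sum_nat_eq0; apply/forall_inP => u evu; rewrite g0 //.
  by apply: contraNneq nevy0 => <-.
apply: leq_trans g_sum; apply: gamma_2_le_sum => // y.
by have := g_le2 y; have := no2 y; case: (g y) => [|[|[]]].
Qed.

Lemma gamma_le_gamma_I : gamma e <= gamma_I e.
Proof.
apply: leq_bigmin => [|f /forallP f_italian].
  by rewrite (leq_trans (gamma_k_le_card (kdom_setT e 1))) // cardsT leq_pmull.
by apply: gamma_le_sum => y fy0; have := f_italian y; rewrite fy0 => /ltnW.
Qed.

End DominationByFunctions.

Section LexicographicProduct.
Variables (T1 T2 : finType) (e1 : rel T1) (e2 : rel T2).
Hypotheses (e1_sg : simple_graph e1) (e1_ni : no_isolated e1) (T2_ge2 : 2 <= #|T2|).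

Let e1_irr : irreflexive e1. Proof. by case: e1_sg. Qed.

Lemma nsum_lexprod (h : T1 * T2 -> nat) x y :
  nsum (lexprod e1 e2) h (x, y) =
  nsum e1 (fun a => \sum_b h (a, b)) x + nsum e2 (fun b => h (x, b)) y.
Proof.
rewrite /nsum /lexprod /=.
transitivity (\sum_a \sum_b (if e1 x a || (x == a) && e2 y b then h (a, b) else 0)).
  by rewrite pair_bigA big_mkcond /=; apply: eq_bigr => -[a b] _.
rewrite (bigD1 x) //= e1_irr eqxx /= -big_mkcond addnC; congr (_ + _).
rewrite [RHS]big_mkcond [RHS](bigD1 x) //= e1_irr add0n; apply: eq_bigr => a ax.
by case: (e1 x a) => //=; rewrite eq_sym (negbTE ax) big1.
Qed.

Section ItalianColumns.
Variable f : {ffun T1 * T2 -> 'I_3}.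
Hypothesis f_italian : @is_wdom _ (lexprod e1 e2) [:: 2; 0; 0] f.

Let fibre x b : nat := f (x, b).
Let col x : nat := \sum_b fibre x b.

Lemma fibre_italian x y :
  fibre x y = 0 -> 2 <= nsum e1 col x + nsum e2 (fibre x) y.
Proof.
move=> fxy0; have := forallP f_italian (x, y).
rewrite -[nbsum _ _ _]/(nsum _ (fun p => f p : nat) (x, y)) nsum_lexprod.
by rewrite -/(fibre x y) fxy0.
Qed.

Lemma nsum_fibre_le_col x y : nsum e2 (fibre x) y <= col x.
Proof. exact: leq_sum_subpred. Qed.

Lemma fibre_le2 x y : fibre x y <= 2.
Proof. by rewrite -ltnS; exact: ltn_ord. Qed.

Lemma col0_nsum x : col x = 0 -> 2 <= nsum e1 col x.
Proof.
move=> col0; have [y _] : exists y, y \in T2 by apply/card_gt0P; apply: leq_trans T2_ge2.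
have := leq_term_sumT (fibre x) y; rewrite -/(col x) col0 leqn0 => /eqP.
by move/fibre_italian; have := nsum_fibre_le_col x y; lia.
Qed.

Lemma col1_nsum x : col x = 1 -> 1 <= nsum e1 col x.
Proof.
move=> col1; have [y /eqP fxy0] : exists y, fibre x y == 0.
  apply/existsP; apply: contraTT T2_ge2 => /existsPn fibre_pos.
  rewrite -ltnNge ltnS -col1 -sum1_card; apply: leq_sum => b _.
  by rewrite lt0n fibre_pos.
by have := fibre_italian fxy0; have := nsum_fibre_le_col x y; lia.
Qed.

Lemma col1_nsum_gamma x : 2 <= gamma e2 -> col x = 1 -> 2 <= nsum e1 col x.
Proof.
move=> gamma_ge2 col1; rewrite leqNgt; apply/negP => nsum_lt2.
have : gamma e2 <= col x by apply: gamma_le_sum => y /fibre_italian; lia.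
lia.
Qed.

Lemma col_nsum_ge3 x : 2 <= gamma e2 -> 2 < gamma_2 e2 ->
  2 <= col x -> 3 <= col x + nsum e1 col x.
Proof.
move=> gamma_ge2 gamma_2_gt2 col_ge2.
have [nsum0|] := posnP (nsum e1 col x); last lia.
rewrite nsum0 addn0 ltnNge; apply/negP => col_le2.
have fibre_dom y : fibre x y = 0 -> 2 <= nsum e2 (fibre x) y.
  by move/fibre_italian; rewrite nsum0.
have [] := gamma_le1_or_gamma_2_le2 (fibre_le2 x) fibre_dom col_le2; lia.
Qed.

Lemma col_nsum_ge4 x : 3 <= gamma e2 -> (gamma_I e2 <> 3 \/ gamma e2 <> 3) ->
  2 <= col x -> 4 <= col x + nsum e1 col x.
Proof.
move=> gamma_ge3 gamma_ne3 col_ge2.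
have [nsum_ge2|nsum_lt2] := leqP 2 (nsum e1 col x); first lia.
have [nsum0|nsum_pos] := posnP (nsum e1 col x).
  have : gamma_I e2 <= col x.
    by apply: gamma_I_le_sum (fibre_le2 x) _ => y /fibre_italian; rewrite nsum0.
  have := gamma_le_gamma_I e2; lia.
have : gamma e2 <= col x by apply: gamma_le_sum => y /fibre_italian; lia.
lia.
Qed.

End ItalianColumns.

Lemma gamma_w_le_gamma_I_lexprod w1 w2 : w1 <= 2 -> w2 <= 2 ->
  (forall f : {ffun T1 * T2 -> 'I_3}, @is_wdom _ (lexprod e1 e2) [:: 2; 0; 0] f ->
     relaxed_wdom e1 w1 w2 (fun x => \sum_b (f (x, b) : nat))) ->
  gamma_w e1 [:: 2; w1; w2] <= gamma_I (lexprod e1 e2).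
Proof.
move=> w1_le2 w2_le2 cols_relaxed.
rewrite /gamma_I.
have [f f_italian <-] := gamma_w_attained (e := lexprod e1 e2) 0 (fun _ => leq0n _).
have [e1_sym _] := e1_sg.
by rewrite /weight pair_sum; exact: gamma_w_le_relaxed (cols_relaxed f f_italian).
Qed.

Lemma gamma_I_lexprod_le_spread w1 w2 (P1 P2 : T2 -> nat) : w2 <= 2 ->
  \sum_b P1 b = 1 -> \sum_b P2 b = 2 ->
  (forall y, P1 y = 0 -> 2 <= w1 + nsum e2 P1 y) ->
  (forall y, P2 y = 0 -> 2 <= w2 + nsum e2 P2 y) ->
  gamma_I (lexprod e1 e2) <= gamma_w e1 [:: 2; w1; w2].
Proof.
move=> w2_le2 P1_sum P2_sum P1_dom P2_dom.
have const2_dom v : w2 <= nsum e1 (fun=> 2) v.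
  by have [u e1vu] := e1_ni v; apply: leq_trans w2_le2 (nsum_ge_nbr _ e1vu).
have [g g_wdom <-] := gamma_w_attained w1 const2_dom.
pose h p : nat := match g p.1 : nat with 0 => 0 | 1 => P1 p.2 | _ => P2 p.2 end.
have h_le2 p : h p <= 2.
  rewrite /h; case: (nat_of_ord _) => [|[|_]] //; last by rewrite -P2_sum leq_term_sumT.
  by rewrite (leq_trans (leq_term_sumT _ _)) ?P1_sum.
have col_h x : \sum_b h (x, b) = g x.
  rewrite /h /=; case: (nat_of_ord (g x)) (ltn_ord (g x)) => [|[|[|//]]] _ //.
  exact: big1.
apply: leq_trans (gamma_I_le_sum h_le2 _) _; last first.
  by rewrite pair_sum; apply: eq_leq; apply: eq_bigr => x _; exact: col_h.
move=> [x y] hxy0; rewrite nsum_lexprod.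
rewrite (_ : nsum e1 _ x = nsum e1 (fun a => g a : nat) x); last first.
  by apply: eq_bigr => a _; exact: col_h.
have := forallP g_wdom x; rewrite /h /= in hxy0 *.
case: (nat_of_ord (g x)) (ltn_ord (g x)) hxy0 => [|[|[|//]]] _ hxy0 /= gx_dom.
- exact: leq_trans gx_dom (leq_addr _ _).
- exact: leq_trans (P1_dom _ hxy0) (leq_add gx_dom (leqnn _)).
- exact: leq_trans (P2_dom _ hxy0) (leq_add gx_dom (leqnn _)).
Qed.

Lemma gamma_I_lexprod_le_point w1 w2 (a : T2) : w2 <= 2 ->
  (forall y, y != a -> 2 <= w1 + e2 y a) ->
  (forall y, y != a -> 2 <= w2 + (e2 y a).*2) ->
  gamma_I (lexprod e1 e2) <= gamma_w e1 [:: 2; w1; w2].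
Proof.
move=> w2_le2 a_dom1 a_dom2.
have nsum_point n y :
    y != a -> e2 y a * n <= nsum e2 (fun b => if b == a then n else 0) y.
  move=> ya; case: (boolP (e2 y a)) => [e2ya|//].
  by rewrite mul1n (leq_trans _ (nsum_ge_nbr _ e2ya)) ?eqxx.
apply: (gamma_I_lexprod_le_spread (P1 := fun b => if b == a then 1 else 0)
                                 (P2 := fun b => if b == a then 2 else 0)) => //.
- exact: sum_pointmass.
- exact: sum_pointmass.
- move=> y; case: eqP => // /eqP ya _.
  by have := nsum_point 1 y ya; have := a_dom1 y ya; lia.
- move=> y; case: eqP => // /eqP ya _.
  by have := nsum_point 2 y ya; have := a_dom2 y ya; lia.
Qed.

Lemma gamma_I_lexprod_le_pair k w2 (S : {set T2}) : w2 <= 2 -> 2 <= w2 + k ->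
  #|S| = 2 -> is_kdom e2 k S ->
  gamma_I (lexprod e1 e2) <= gamma_w e1 [:: 2; 2; w2].
Proof.
move=> w2_le2 k_large S2 /forallP S_kdom.
have [a _] : exists a, a \in S by apply/card_gt0P; rewrite S2.
apply: (gamma_I_lexprod_le_spread (P1 := fun b => if b == a then 1 else 0)
                                 (P2 := fun b => (b \in S : nat))) => //.
- exact: sum_pointmass.
- by rewrite sum_indicator.
- move=> y; rewrite nsum_indicator; case: (boolP (y \in S)) => // yS _.
  by have := implyP (S_kdom y) yS; lia.
Qed.

Lemma gamma_I_lexprod_210 :
  gamma e2 = 1 -> gamma_I (lexprod e1 e2) = gamma_w e1 [:: 2; 1; 0].
Proof.
move=> gamma1; apply/eqP; rewrite eqn_leq; apply/andP; split.
  have [S /forallP S_dom] := gamma_k_attained e2 1.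
  rewrite -/(gamma e2) gamma1 => /eqP/cards1P[a Sa].
  have a_dom y : y != a -> e2 y a.
    move=> ya; have := implyP (S_dom y); rewrite Sa inE ya => /(_ isT)/card_gt0P[u].
    by rewrite !inE => /andP[/eqP ->].
  by apply: (gamma_I_lexprod_le_point (a := a)) => // y /a_dom ->.
apply: gamma_w_le_gamma_I_lexprod => // f f_italian x.
by split; [exact: col0_nsum | exact: col1_nsum | lia].
Qed.

Lemma gamma_I_lexprod_220 : gamma_2 e2 = 2 -> gamma e2 = 2 ->
  gamma_I (lexprod e1 e2) = gamma_w e1 [:: 2; 2; 0].
Proof.
move=> gamma_2_2 gamma2; apply/eqP; rewrite eqn_leq; apply/andP; split.
  have [S S_kdom S_card] := gamma_k_attained e2 2.
  by apply: (gamma_I_lexprod_le_pair (k := 2) (S := S)); rewrite // S_card.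
apply: gamma_w_le_gamma_I_lexprod => // f f_italian x.
by split; [exact: col0_nsum | apply: col1_nsum_gamma; rewrite ?gamma2 | lia].
Qed.

Lemma gamma_I_lexprod_221 : gamma e2 = 2 -> 2 < gamma_2 e2 ->
  gamma_I (lexprod e1 e2) = gamma_w e1 [:: 2; 2; 1].
Proof.
move=> gamma2 gamma_2_gt2; apply/eqP; rewrite eqn_leq; apply/andP; split.
  have [S S_kdom S_card] := gamma_k_attained e2 1.
  by apply: (gamma_I_lexprod_le_pair (k := 1) (S := S)); rewrite // S_card.
apply: gamma_w_le_gamma_I_lexprod => // f f_italian x.
split; [exact: col0_nsum | apply: col1_nsum_gamma; rewrite ?gamma2 //|].
by apply: col_nsum_ge3; rewrite ?gamma2.
Qed.

Lemma gamma_I_lexprod_222 : 3 <= gamma e2 -> (gamma_I e2 <> 3 \/ gamma e2 <> 3) ->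
  gamma_I (lexprod e1 e2) = gamma_w e1 [:: 2; 2; 2].
Proof.
move=> gamma_ge3 gamma_ne3; apply/eqP; rewrite eqn_leq; apply/andP; split.
  have [a _] : exists a, a \in T2 by apply/card_gt0P; apply: leq_trans T2_ge2.
  exact: (gamma_I_lexprod_le_point (a := a)).
apply: gamma_w_le_gamma_I_lexprod => // f f_italian x.
split; [exact: col0_nsum | apply: col1_nsum_gamma; lia |].
exact: col_nsum_ge4.
Qed.

End LexicographicProduct.

Unset Implicit Arguments.
Theorem theorem2 (T1 T2 : finType) (e1 : rel T1) (e2 : rel T2) :
  simple_graph e1 -> no_isolated e1 ->
  simple_graph e2 -> 2 <= #|T2| ->
  (gamma_I e2 <> 3 \/ gamma e2 <> 3) ->
  [/\ (gamma e2 = 1 -> gamma_I (lexprod e1 e2) = gamma_w e1 [:: 2; 1; 0]),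
      (gamma_2 e2 = 2 -> gamma e2 = 2 ->
         gamma_I (lexprod e1 e2) = gamma_w e1 [:: 2; 2; 0]),
      (gamma e2 = 2 -> 2 < gamma_2 e2 ->
         gamma_I (lexprod e1 e2) = gamma_w e1 [:: 2; 2; 1])
    & (3 <= gamma e2 -> gamma_I (lexprod e1 e2) = gamma_w e1 [:: 2; 2; 2])].
Proof.
move=> e1_sg e1_ni _ T2_ge2 gamma_ne3; split.
- exact: gamma_I_lexprod_210.
- exact: gamma_I_lexprod_220.
- exact: gamma_I_lexprod_221.
- by move=> gamma_ge3; apply: gamma_I_lexprod_222.
Qed.
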